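(* Let $G$ be a finite graph whose edges are totally ordered and labelled $e_1<e_2<\dots<e_m$. Suppose that for some $i$ and some $k>0$ the edges $e_i,e_{i+1},\dots,e_{i+k}$ are all positive, all join the same two distinct vertices $x,y$ of $G$, and no other edge of $G$ joins $x$ and $y$. Let $S$ be any spanning tree of $G$. Then the subword $a(e_i,S)a(e_{i+1},S)\cdots a(e_{i+k},S)$ of the activity word $a(S)$ is one of the following: (1) when $S$ contains none of $e_i,\dots,e_{i+k}$: $\ell\ell\cdots\ell$ or $dd\cdots d$ (all $k+1$ letters equal); (2) when $S$ contains exactly the edge $e_{i+j}$ among them, for some $0<j\le k$: $\ell^{j}\,D\,d^{k-j}$, i.e. $e_i,\dots,e_{i+j-1}$ are labelled $\ell$, $e_{i+j}$ is labelled $D$, and $e_{i+j+1},\dots,e_{i+k}$ are labelled $d$; (3) when $S$ contains exactly the first edge $e_i$ among them: $L\,d^{k}$ or $D\,d^{k}$.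
   Context: Tutte's activity: let $G$ be a graph with signed edges (each edge positive or negative) whose $m$ edges are totally ordered. For a spanning tree $S$ of $G$ and an edge $e$: if $e\in S$ and $e$ is positive, $e$ is internally active, letter $L$, if $e$ is the lowest-ordered edge of $G$ that reconnects the two components of $S-\{e\}$, and internally inactive, letter $D$, otherwise. If $e\notin S$ and $e$ is positive, $e$ is externally active, letter $\ell$, if $e$ is the lowest-ordered edge of the unique cycle contained in $S\cup\{e\}$, and externally inactive, letter $d$, otherwise. For negative edges the same rules give the barred letters $\overline{L},\overline{D},\overline{\ell},\overline{d}$. The letter of $e$ is denoted $a(e,S)$, and the activity word $a(S)$ is the word of length $m$ whose $r$-th letter is $a(e_r,S)$. *)

(* A finite multigraph (loops and parallel edges allowed)
   with vertex set a finType V and m edges indexed by 'I_m; the total order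
   on edges is the order of the indices (e_r = edge r, 0-indexed).
   Edge r joins src r and tgt r; sgn r = true means edge r is positive. *)
From mathcomp Require Import all_boot.
Set Implicit Arguments. Unset Strict Implicit. Unset Printing Implicit Defensive.

Section Graph.
Variables (V : finType) (m : nat) (src tgt : 'I_m -> V) (sgn : 'I_m -> bool).

Definition joins (f : 'I_m) (u v : V) : bool :=
  ((src f == u) && (tgt f == v)) || ((src f == v) && (tgt f == u)).

Definition adj (F : {set 'I_m}) : rel V :=
  fun u v => [exists f in F, joins f u v].

Definition conn (F : {set 'I_m}) (u v : V) : bool := connect (adj F) u v.

(* F is acyclic: no edge of F lies on a cycle of F, i.e. removing any edge f
   of F disconnects its endpoints (a loop is a cycle). *)
Definition forest (F : {set 'I_m}) : bool :=
  [forall f in F, ~~ conn (F :\ f) (src f) (tgt f)].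

Definition spanning_tree (S : {set 'I_m}) : bool :=
  forest S && [forall u, forall v, conn S u v].

Definition circuit (C : {set 'I_m}) : bool :=
  ~~ forest C && [forall f in C, forest (C :\ f)].

Definition reconnects (S : {set 'I_m}) (e f : 'I_m) : bool :=
  let S' := S :\ e in
  (conn S' (src e) (src f) && conn S' (tgt e) (tgt f)) ||
  (conn S' (src e) (tgt f) && conn S' (tgt e) (src f)).

Definition int_active (S : {set 'I_m}) (e : 'I_m) : bool :=
  [forall f, reconnects S e f ==> (val e <= val f)].

Definition ext_active (S : {set 'I_m}) (e : 'I_m) : bool :=
  [exists C : {set 'I_m},
     [&& circuit C, C \subset e |: S, e \in C & [forall f in C, val e <= val f]]].

End Graph.

Inductive letter := L | D | l | d | Lbar | Dbar | lbar | dbar.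

Definition act_letter (V : finType) (m : nat) (src tgt : 'I_m -> V)
  (sgn : 'I_m -> bool) (e : 'I_m) (S : {set 'I_m}) : letter :=
  if e \in S then
    (if int_active src tgt S e then (if sgn e then L else Lbar)
     else (if sgn e then D else Dbar))
  else
    (if ext_active src tgt S e then (if sgn e then l else lbar)
     else (if sgn e then d else dbar)).

From mathcomp Require Import all_boot.
From mathcomp Require Import fingroup perm.
Set Implicit Arguments. Unset Strict Implicit. Unset Printing Implicit Defensive.

(* The edges e_i, ..., e_{i+k} are pairwise parallel, so exchanging two of them
   is an automorphism of the graph, and a forest contains at most one of them.
   If the tree S contains e_{i+j}, every lower block edge closes a 2-cycle with
   it and is externally active; e_i reconnects S - e_{i+j}, so e_{i+j} is
   internally inactive when j > 0; and a higher block edge e cannot be the least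
   edge of its fundamental cycle, since exchanging e with e_{i+j} would then
   produce a cycle inside S. If S contains no block edge, the other edges of a
   fundamental cycle of least edge e lie in S above e, hence above the whole
   block, so the exchange maps it to a fundamental cycle of least edge e' for
   any block edge e': all block edges are externally active, or none is. *)

Section Multigraph.
Variables (V : finType) (m : nat) (src tgt : 'I_m -> V).
Local Notation joins := (joins src tgt).
Local Notation adj := (adj src tgt).
Local Notation conn := (conn src tgt).
Local Notation forest := (forest src tgt).
Local Notation circuit := (circuit src tgt).
Implicit Types (F G C S : {set 'I_m}) (e f g : 'I_m) (u v : V).

Definition parallel (f g : 'I_m) : Prop := joins f =2 joins g.

Lemma joins_sym f u v : joins f u v = joins f v u.
Proof. by rewrite /joins orbC. Qed.

Lemma adj_sym F : symmetric (adj F).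
Proof.
by move=> u v; apply/existsP/existsP => -[f]; exists f; rewrite joins_sym.
Qed.

Lemma conn_sym F u v : conn F u v = conn F v u.
Proof. exact: (sym_connect_sym (adj_sym F)). Qed.

Lemma joins_ends f : joins f (src f) (tgt f).
Proof. by rewrite /joins !eqxx. Qed.

Lemma joins_parallel f g u v : joins f u v -> joins g u v -> parallel f g.
Proof.
move=> + + a b; rewrite /joins.
by case/orP=> /andP[/eqP-> /eqP->]; case/orP=> /andP[/eqP-> /eqP->];
  rewrite // orbC !(andbC (_ == a)).
Qed.

Lemma parallel_sym f g : parallel f g -> parallel g f.
Proof. by move=> fg u v; rewrite fg. Qed.

Lemma parallel_ends f g : parallel f g ->
  (src g = src f /\ tgt g = tgt f) \/ (src g = tgt f /\ tgt g = src f).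
Proof.
move=> fg; have := joins_ends g; rewrite -fg /joins.
by case/orP=> /andP[/eqP-> /eqP->]; [left | right].
Qed.

Lemma parallel_conn F f g : parallel f g ->
  conn F (src g) (tgt g) = conn F (src f) (tgt f).
Proof. by case/parallel_ends=> -[-> ->]; rewrite // conn_sym. Qed.

Lemma conn_sub F G u v :
  F \subset G -> conn F u v -> conn G u v.
Proof.
move=> FG; apply: connect_sub => a b /existsP[f /andP[fF fab]].
by apply: connect1; apply/existsP; exists f; rewrite (subsetP FG _ fF).
Qed.

Lemma conn_edge F f u v : f \in F -> joins f u v -> conn F u v.
Proof. by move=> fF fuv; apply: connect1; apply/existsP; exists f; rewrite fF. Qed.

Lemma conn_set0 u v : conn set0 u v -> u = v.
Proof. by case/connectP=> -[|z p] //= /andP[/existsP[f]]; rewrite inE. Qed.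

Lemma forest_sub F G : F \subset G -> forest G -> forest F.
Proof.
move=> FG /forallP forG; apply/forallP => f; apply/implyP => fF.
move: (forG f); rewrite (subsetP FG _ fF) /=; apply: contra.
exact/conn_sub/setSD.
Qed.

Lemma forest_set1 f : src f != tgt f -> forest [set f].
Proof.
move=> nloop; apply/forallP => g; apply/implyP; rewrite inE => /eqP->.
by rewrite setDv; apply: contra nloop => /conn_set0->.
Qed.

Lemma forest_parallel_eq F f g :
  forest F -> f \in F -> g \in F -> parallel f g -> f = g.
Proof.
move=> /forallP/(_ f) forF fF gF fg; apply/eqP; apply: contraTT forF => neq.
rewrite fF negbK; apply: (conn_edge (f := g)).
  by rewrite !inE eq_sym neq.
by rewrite -fg joins_ends.
Qed.

Lemma circuit_not_forest C F :
  circuit C -> C \subset F -> ~~ forest F.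
Proof. by case/andP=> notforC _ CF; apply: contra notforC; apply: forest_sub. Qed.

Lemma circuit_parallel_pair f g :
  src f != tgt f -> parallel f g -> f != g -> circuit [set f; g].
Proof.
move=> nloop fg neq; have nloopg : src g != tgt g.
  by case: (parallel_ends fg) => -[-> ->]; rewrite // eq_sym.
apply/andP; split.
  apply/negP => /forallP/(_ f); rewrite !inE eqxx /= setU1K ?inE // => /negP.
  by apply; apply: (conn_edge (f := g)); rewrite ?inE // -fg joins_ends.
apply/forallP => h; apply/implyP; rewrite !inE => /orP[] /eqP->.
  by rewrite setU1K ?inE // forest_set1.
apply: forest_sub (forest_set1 nloop).
by apply/subsetP => z; rewrite !inE => /andP[/negbTE->]; rewrite orbF.
Qed.

Section Relabelling.
Variable s : 'I_m -> 'I_m.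
Hypothesis sK : involutive s.
Hypothesis s_parallel : forall f, parallel (s f) f.

Lemma adj_preim F : adj (s @^-1: F) =2 adj F.
Proof.
move=> u v; apply/existsP/existsP => [[g /andP[gF guv]] | [f /andP[fF fuv]]].
  by exists (s g); rewrite inE in gF; rewrite gF s_parallel.
by exists (s f); rewrite inE sK fF s_parallel.
Qed.

Lemma conn_preim F : conn (s @^-1: F) =2 conn F.
Proof. exact: eq_connect (adj_preim F). Qed.

Lemma preimD1 F f : (s @^-1: F) :\ f = s @^-1: (F :\ s f).
Proof. by apply/setP => z; rewrite !inE (inj_eq (can_inj sK)). Qed.

Lemma forest_preim F : forest (s @^-1: F) = forest F.
Proof.
apply/forallP/forallP => forF f; apply/implyP => fF.
  have := forF (s f); rewrite inE sK fF /= preimD1 sK conn_preim.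
  by rewrite (parallel_conn _ (s_parallel f)).
rewrite inE in fF; have := forF (s f); rewrite fF /= preimD1 conn_preim.
by rewrite (parallel_conn _ (parallel_sym (s_parallel f))).
Qed.

Lemma circuit_preim C : circuit (s @^-1: C) = circuit C.
Proof.
rewrite /circuit forest_preim; congr andb.
apply/forallP/forallP => minC f; apply/implyP => fC.
  by have := minC (s f); rewrite inE sK fC /= preimD1 sK forest_preim.
by rewrite inE in fC; have := minC (s f); rewrite fC /= preimD1 forest_preim.
Qed.

End Relabelling.

Lemma circuit_tperm C e (e' : 'I_m) :
  parallel e e' -> circuit (tperm e e' @^-1: C) = circuit C.
Proof.
move=> ee'; apply: circuit_preim; first exact: tpermK.
by move=> f; case: tpermP => [->|->|_ _] //; apply: parallel_sym.
Qed.

Local Notation ext_active := (ext_active src tgt).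
Local Notation int_active := (int_active src tgt).

Lemma ext_active_parallel_lower S e f :
  src e != tgt e -> parallel e f -> f \in S -> e != f -> (val e <= val f)%N ->
  ext_active S e.
Proof.
move=> nloop ef fS neq le_ef; apply/existsP; exists [set e; f].
rewrite circuit_parallel_pair // !inE eqxx /=; apply/andP; split.
  by apply/subsetP => z; rewrite !inE => /orP[->|/eqP->]; rewrite ?fS ?orbT.
by apply/forallP => z; apply/implyP; rewrite !inE => /orP[] /eqP->.
Qed.

Lemma ext_inactive_parallel_higher S e f :
  forest S -> f \in S -> parallel e f -> (val f < val e)%N -> ~~ ext_active S e.
Proof.
move=> forS fS ef lt_fe; apply/existsP => -[C /and4P[circC CeS eC minC]].
have fC : f \notin C.
  by apply: contraL lt_fe => fC; have := forallP minC f; rewrite fC -leqNgt.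
have CS : tperm e f @^-1: C \subset S.
  apply/subsetP => z; rewrite inE; case: tpermP => [->|->|/eqP ze _] zC //.
    by rewrite zC in fC.
  by move/(subsetP CeS): zC; rewrite !inE (negbTE ze).
have circC' : circuit (tperm e f @^-1: C) by rewrite circuit_tperm.
by rewrite (negbTE (circuit_not_forest circC' CS)) in forS.
Qed.

Lemma int_inactive_parallel_lower S e f :
  parallel e f -> (val f < val e)%N -> ~~ int_active S e.
Proof.
move=> ef lt_fe; have recon : reconnects src tgt S e f.
  by rewrite /reconnects /conn; case: (parallel_ends ef) => -[-> ->];
    rewrite !connect0 ?orbT.
by apply/negP => /forallP/(_ f); rewrite recon leqNgt lt_fe.
Qed.

Lemma ext_active_parallel_transfer S e (e' : 'I_m) :
  parallel e e' -> e' \notin S ->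
  (forall g, g \in S -> val e <= val g -> val e' <= val g)%N ->
  ext_active S e -> ext_active S e'.
Proof.
move=> ee' e'S above /existsP[C /and4P[circC CeS eC minC]].
have e'C_eq : e' \in C -> e' = e.
  by move/(subsetP CeS); rewrite !inE (negbTE e'S) orbF => /eqP.
apply/existsP; exists (tperm e e' @^-1: C).
rewrite circuit_tperm // circC inE tpermR eC /=; apply/andP; split.
  apply/subsetP => g; rewrite !inE; case: tpermP => [->|->|/eqP ge _] gC.
  - by rewrite (e'C_eq gC) eqxx.
  - by rewrite eqxx.
  - by move/(subsetP CeS): gC; rewrite !inE (negbTE ge) /= => ->; rewrite orbT.
apply/forallP => g; apply/implyP; rewrite inE; have := forallP minC (tperm e e' g).
case: tpermP => [->|->|/eqP ge _] le gC //; first by rewrite (e'C_eq gC).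
apply: above; last by rewrite gC in le.
by move/(subsetP CeS): gC; rewrite !inE (negbTE ge).
Qed.

End Multigraph.

Section ParallelBlock.
Variables (V : finType) (m : nat) (src tgt : 'I_m -> V) (sgn : 'I_m -> bool).
Variables (i k : nat) (x y : V) (S : {set 'I_m}).
Hypothesis xy : x != y.
Hypothesis block_pos_xy :
  forall e : 'I_m, (i <= val e <= i + k)%N -> sgn e /\ joins src tgt e x y.
Hypothesis forS : forest src tgt S.

Local Notation blk e := (i <= val e <= i + k)%N.
Local Notation a e := (act_letter src tgt sgn e S).
Implicit Types e : 'I_m.

Lemma block_parallel e (e' : 'I_m) : blk e -> blk e' -> parallel src tgt e e'.
Proof.
by move=> /block_pos_xy[_ exy] /block_pos_xy[_ e'xy]; apply: joins_parallel exy e'xy.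
Qed.

Lemma block_nonloop e : blk e -> src e != tgt e.
Proof.
by case/block_pos_xy=> _; rewrite /joins; case/orP=> /andP[/eqP-> /eqP->];
  rewrite // eq_sym.
Qed.

Lemma block_letter_in e : blk e -> e \in S ->
  a e = if int_active src tgt S e then L else D.
Proof. by move=> /block_pos_xy[pos _] eS; rewrite /act_letter eS pos. Qed.

Lemma block_letter_out e : blk e -> e \notin S ->
  a e = if ext_active src tgt S e then l else d.
Proof. by move=> /block_pos_xy[pos _] eS; rewrite /act_letter (negbTE eS) pos. Qed.

Lemma block_word_outside_tree (i_lt_m : (i < m)%N) :
  (forall e : 'I_m, blk e -> e \notin S) ->
  (forall e : 'I_m, blk e -> a e = l) \/ (forall e : 'I_m, blk e -> a e = d).
Proof.
move=> notS; pose e0 := Ordinal i_lt_m.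
have be0 : blk e0 by rewrite leqnn leq_addr.
have tree_above g : g \in S -> (i <= val g)%N -> (i + k < val g)%N.
  by move=> gS ig; apply: contraTT gS => gk; apply: notS; rewrite ig leqNgt.
have [act0|inact0] := boolP (ext_active src tgt S e0); [left | right] => e be;
  rewrite block_letter_out ?notS //; have [ie ek] := andP be.
  rewrite (ext_active_parallel_transfer (block_parallel be0 be)) ?notS // => g gS e0g.
  exact/ltnW/(leq_ltn_trans ek)/tree_above.
case: ifP => // act; case/negP: inact0.
apply: (ext_active_parallel_transfer (block_parallel be be0)) act => //; first exact: notS.
by move=> g _ eg; apply: leq_trans eg.
Qed.

Section TreeEdge.
Variables (s : 'I_m) (bs : blk s) (sS : s \in S).

Lemma block_tree_edge_unique e : blk e -> (e \in S) = (e == s).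
Proof.
move=> be; apply/idP/eqP => [eS|->//].
exact: forest_parallel_eq forS eS sS (block_parallel be bs).
Qed.

Lemma block_letter_below_tree_edge e : blk e -> (val e < val s)%N -> a e = l.
Proof.
move=> be lt_es; have neq : e != s by rewrite -val_eqE neq_ltn lt_es.
rewrite block_letter_out ?block_tree_edge_unique //.
rewrite (ext_active_parallel_lower (f := s)) //.
- exact: block_nonloop.
- exact: block_parallel.
- exact: ltnW.
Qed.

Lemma block_letter_above_tree_edge e : blk e -> (val s < val e)%N -> a e = d.
Proof.
move=> be lt_se; have neq : e != s by rewrite -val_eqE neq_ltn lt_se orbT.
rewrite block_letter_out ?block_tree_edge_unique //.
by rewrite (negbTE (ext_inactive_parallel_higher forS sS (block_parallel be bs) lt_se)).
Qed.

Lemma block_letter_tree_edge : (i < val s)%N -> a s = D.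
Proof.
move=> lt_is; pose e0 := Ordinal (ltn_trans lt_is (ltn_ord s)).
have be0 : blk e0 by rewrite leqnn leq_addr.
have inact := int_inactive_parallel_lower S (block_parallel bs be0) lt_is.
by rewrite block_letter_in // (negbTE inact).
Qed.

End TreeEdge.

End ParallelBlock.

Theorem lemma3p2 (V : finType) (m : nat) (src tgt : 'I_m -> V)
  (sgn : 'I_m -> bool) (i k : nat) (x y : V) (S : {set 'I_m}) :
  (0 < k)%N -> (i + k < m)%N -> x != y ->
  (forall e : 'I_m, (i <= val e <= i + k)%N -> sgn e /\ joins src tgt e x y) ->
  (forall e : 'I_m, joins src tgt e x y -> (i <= val e <= i + k)%N) ->
  spanning_tree src tgt S ->
  let a := fun e : 'I_m => act_letter src tgt sgn e S in
  let blk := fun e : 'I_m => (i <= val e <= i + k)%N in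
  (* (1) S contains none of e_i..e_{i+k}: all l or all d *)
  ((forall e : 'I_m, blk e -> e \notin S) /\
   ((forall e : 'I_m, blk e -> a e = l) \/ (forall e : 'I_m, blk e -> a e = d)))
  \/
  (* (2) S contains exactly e_{i+j}, 0 < j <= k: l^j D d^(k-j) *)
  (exists j : nat, [/\ (0 < j <= k)%N,
     (forall e : 'I_m, blk e -> (e \in S) = (val e == i + j)) &
     (forall e : 'I_m, blk e ->
        a e = if (val e < i + j)%N then l else if val e == i + j then D else d)])
  \/
  (* (3) S contains exactly e_i: L d^k or D d^k *)
  ((forall e : 'I_m, blk e -> (e \in S) = (val e == i)) /\
   (forall e : 'I_m, blk e -> val e = i -> a e = L \/ a e = D) /\
   (forall e : 'I_m, blk e -> (i < val e)%N -> a e = d)).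
Proof.
move=> _ ikm xy pos_xy _ /andP[forS _] a blk; rewrite {}/a {}/blk.
have [s /andP[sS bs] | noS] :=
  pickP [pred e | (e \in S) && (i <= val e <= i + k)%N]; last first.
  have notS (e : 'I_m) : (i <= val e <= i + k)%N -> e \notin S.
    by move=> be; apply/negP => eS; have := noS e; rewrite /= eS be.
  left; split=> //; apply: (block_word_outside_tree pos_xy) => //.
  exact: leq_ltn_trans (leq_addr k i) ikm.
have inS (e : 'I_m) : (i <= val e <= i + k)%N -> (e \in S) = (val e == val s).
  by move=> be; rewrite val_eqE (block_tree_edge_unique pos_xy forS bs sS be).
have above (e : 'I_m) : (i <= val e <= i + k)%N -> (val s < val e)%N ->
    act_letter src tgt sgn e S = d.
  exact: (block_letter_above_tree_edge (e := e) pos_xy forS bs sS).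
have [ie ek] := andP bs; right; have [si | si] := eqVneq (val s) i.
  right; split=> [e be | ]; first by rewrite inS // si.
  split=> e be; last by rewrite -si; apply: above.
  move=> es; rewrite (val_inj (etrans es (esym si))) (block_letter_in pos_xy) //.
  by case: int_active; [left | right].
left; exists (val s - i); rewrite subnKC //; split=> // [|e be].
  by rewrite subn_gt0 ltn_neqAle eq_sym si ie leq_subLR.
case: ltngtP => [lt_es | lt_se | /val_inj->].
- exact: (block_letter_below_tree_edge (e := e) xy pos_xy forS bs sS).
- exact: above.
- by apply: (block_letter_tree_edge pos_xy bs sS); rewrite ltn_neqAle eq_sym si.
Qed.
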